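(* For $n\ge 2$, the number of shallow Grassmannian permutations in $S_n$ (shallow permutations with at most one descent) equals $\binom{n+1}{3}+1$.
   Context: For $\pi\in S_n$: $D(\pi)=\sum_{i}|\pi_i-i|$, $I(\pi)$ is the number of inversions, $T(\pi)=n-\mathrm{cyc}(\pi)$ with $\mathrm{cyc}$ the number of cycles in the disjoint cycle decomposition; $\pi$ is shallow if $I(\pi)+T(\pi)=D(\pi)$. A descent of $\pi$ is an index $i\in[n-1]$ with $\pi_i>\pi_{i+1}$; a permutation is Grassmannian if it has at most one descent. *)

From mathcomp Require Import all_boot all_order all_fingroup.
Set Implicit Arguments. Unset Strict Implicit. Unset Printing Implicit Defensive.

(* Permutations of [n] are modelled as 'S_n = {perm 'I_n}, i.e. on {0,..,n-1}
   (a shift by one of [n] = {1,..,n}; all statistics below are shift-invariant). *)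

Definition Dstat n (s : 'S_n) : nat :=
  \sum_(i < n) (maxn (s i) i - minn (s i) i).

Definition Istat n (s : 'S_n) : nat :=
  #|[set p : 'I_n * 'I_n | (p.1 < p.2) && (s p.2 < s p.1)]|.

(* cyc(pi) = number of cycles in the disjoint cycle decomposition
   (fixed points count as cycles of length 1) *)
Definition cyc n (s : 'S_n) : nat := #|porbits s|.

Definition Tstat n (s : 'S_n) : nat := n - cyc s.

Definition shallow n (s : 'S_n) : bool := Istat s + Tstat s == Dstat s.

Definition descents n (s : 'S_n) : {set 'I_n} :=
  [set i : 'I_n | [exists j : 'I_n, (val j == (val i).+1) && (s j < s i)]].

Definition grassmannian n (s : 'S_n) : bool := #|descents s| <= 1.

From mathcomp Require Import all_boot all_order all_fingroup zify.

Set Implicit Arguments.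
Unset Strict Implicit.
Unset Printing Implicit Defensive.

(* If s has a single descent, at position d, then s increases on [0, d] and on
   [d+1, n), so every inversion of s pairs a point of the first run with a point of
   the second, and |s i - i| is the number of inversions involving i: D(s) = 2 I(s).
   Shallowness then says I(s) = T(s) = n - cyc(s), which is less than the number m
   of moved points.  But each moved point after the descent is inverted with d, so
   I(s) >= m - 1 already, and equality forces s i to be i or i + 1 before d.  Hence
   s is the cycle x -> x+1 -> ... -> d -> s d -> s d - 1 -> ... -> d+1 -> x, one
   for each x < d+1 < s d + 1 <= n, and all of these are shallow. *)

Lemma card_set_sum (T : finType) (P : pred T) :
  #|[set x | P x]| = \sum_x (P x : nat).
Proof. by rewrite -sum1dep_card big_mkcond; apply: eq_bigr => x _; case: (P x). Qed.

Lemma sum_nat_interval_const a b n c : a <= b <= n ->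
  \sum_(0 <= i < n) (if a <= i < b then c else 0) = (b - a) * c.
Proof.
case/andP=> hab hbn.
rewrite (big_cat_nat (n := a)) //=; last exact: leq_trans hbn.
rewrite (big_cat_nat (n := b) (m := a)) //=.
rewrite (eq_big_nat _ _ (F2 := fun _ => 0) (m := 0) (n := a)); last first.
  by move=> i /andP[_ hi]; rewrite leqNgt hi.
rewrite (eq_big_nat _ _ (F2 := fun _ => c) (m := a) (n := b)); last first.
  by move=> i ->.
rewrite (eq_big_nat _ _ (F2 := fun _ => 0) (m := b) (n := n)); last first.
  by move=> i /andP[hi _]; rewrite ltnNge hi andbF.
by rewrite !sum_nat_const_nat !muln0 add0n addn0.
Qed.

Lemma card_ord_interval n a b : a <= b <= n ->
  #|[set i : 'I_n | a <= i < b]| = b - a.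
Proof.
move=> hab; rewrite card_set_sum -(big_mkord xpredT (fun i => (a <= i < b : nat))).
rewrite -[b - a]muln1 -(sum_nat_interval_const 1 hab).
by apply: eq_big_nat => i _; case: (a <= i < b).
Qed.

Lemma card_ord_lt n b : b <= n -> #|[set i : 'I_n | i < b]| = b.
Proof.
by move=> hb; rewrite -[b in RHS]subn0 -(@card_ord_interval n) ?hb //; apply: eq_card.
Qed.

(** * Inversion table *)

Section InversionTable.
Variables (n : nat) (s : 'S_n).

Definition invR (i : 'I_n) := #|[set j : 'I_n | (i < j) && (s j < s i)]|.
Definition invL (i : 'I_n) := #|[set j : 'I_n | (j < i) && (s i < s j)]|.

(* Both sides count the j with j < i or s j < s i. *)
Lemma perm_invLR i : s i + invL i = i + invR i.
Proof.
have card_below : #|[set j : 'I_n | s j < s i]| = s i.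
  rewrite -[RHS](card_ord_lt (ltnW (ltn_ord (s i)))).
  rewrite -[in RHS](card_preimset _ (@perm_inj _ s)).
  by apply: eq_card => j; rewrite !inE.
have card_before : #|[set j : 'I_n | j < i]| = i by rewrite card_ord_lt // ltnW.
have splitL := cardsID [set j : 'I_n | j < i] [set j : 'I_n | s j < s i].
have splitR := cardsID [set j : 'I_n | s j < s i] [set j : 'I_n | j < i].
have diffL : [set j : 'I_n | s j < s i] :\: [set j : 'I_n | j < i] =
             [set j : 'I_n | (i < j) && (s j < s i)].
  apply/setP => j; rewrite !inE.
  case: (ltngtP j i) => hj; rewrite ?andbF ?andbT //=.
  by rewrite (val_inj hj) ltnn.
have diffR : [set j : 'I_n | j < i] :\: [set j : 'I_n | s j < s i] =
             [set j : 'I_n | (j < i) && (s i < s j)].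
  apply/setP => j; rewrite !inE andbC.
  case: (ltngtP (s i) (s j)) => hj; rewrite ?andbF ?andbT //=.
  by rewrite (perm_inj (val_inj hj)) ltnn.
rewrite diffL in splitL; rewrite diffR setIC in splitR; rewrite /invL /invR; lia.
Qed.

Lemma Istat_sum_invR : Istat s = \sum_i invR i.
Proof.
rewrite /Istat /invR card_set_sum.
rewrite -(pair_big xpredT xpredT (fun i j : 'I_n => ((i < j) && (s j < s i) : nat))) /=.
by apply: eq_bigr => i _; rewrite card_set_sum.
Qed.

Lemma Istat_sum_invL : Istat s = \sum_i invL i.
Proof.
rewrite Istat_sum_invR /invR /invL.
under eq_bigr do rewrite card_set_sum.
rewrite exchange_big /=; apply: eq_bigr => i _; rewrite card_set_sum.
exact: eq_bigr.
Qed.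

End InversionTable.

(** * Increasing runs and descents *)

Definition increasing_on n (s : 'S_n) (a b : nat) :=
  forall i j : 'I_n, a <= i -> i < j -> j < b -> s i < s j.

Definition two_runs n (s : 'S_n) k := increasing_on s 0 k /\ increasing_on s k n.

Lemma increasing_on_gap n (s : 'S_n) a b (i j : 'I_n) : increasing_on s a b ->
  a <= i -> i <= j -> j < b -> s i + (j - i) <= s j.
Proof.
move=> hs hai hij hjb.
suff gap : forall t (k : 'I_n), (k : nat) = i + t -> k < b -> s i + t <= s k.
  by apply: gap => //; rewrite subnKC.
elim=> [|t IH] k hk hkb.
  by rewrite addn0 (_ : i = k) //; apply: val_inj; rewrite /= hk addn0.
have lt_n : i + t < n by have := ltn_ord k; lia.
have := IH (Ordinal lt_n) erefl ltac:(rewrite /=; lia).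
have := hs (Ordinal lt_n) k ltac:(rewrite /=; lia) ltac:(rewrite /=; lia) hkb.
rewrite /=; lia.
Qed.

Lemma increasing_tail_uniq n (s1 s2 : 'S_n) k :
  increasing_on s1 k n -> increasing_on s2 k n ->
  (forall i : 'I_n, i < k -> s1 i = s2 i) -> s1 = s2.
Proof.
move=> inc1 inc2 head; apply/permP => j.
elim/ltn_ind: {j}(j : nat) {-2}j (erefl (j : nat)) => m IH j hj.
case: (ltnP j k) => hjk; first exact: head.
(* At the least j with s1 j < s2 j, the value s1 j is taken by s2 at some j' > j,
   which contradicts the monotonicity of s2. *)
wlog lt12 : s1 s2 inc1 inc2 head IH / s1 j < s2 j.
  move=> hw; case: (ltngtP (s1 j) (s2 j)) => [|lt21|/val_inj //]; first exact: hw.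
  by symmetry; apply: hw => // [i hi | m' hm' j' hj']; [rewrite head | rewrite (IH m')].
exfalso; pose j' := (s2^-1)%g (s1 j); have s2j' : s2 j' = s1 j by rewrite permKV.
case: (ltngtP j' j) => hj'.
- have := IH j' ltac:(lia) j' erefl; rewrite s2j' => /perm_inj ej.
  by move: hj'; rewrite ej ltnn.
- by have := inc2 j j' hjk hj' (ltn_ord j'); rewrite s2j'; lia.
- by move: s2j'; rewrite (val_inj hj') => e; move: lt12; rewrite e ltnn.
Qed.

Section InversionsOfTwoRuns.
Variables (n : nat) (s : 'S_n) (k : nat).
Hypothesis s_runs : two_runs s k.

Lemma invL_first_run (i : 'I_n) : i < k -> invL s i = 0.
Proof.
move=> hik; apply/eqP; rewrite cards_eq0; apply/eqP/setP => j; rewrite !inE.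
apply/negbTE/negP => /andP[hji hsij].
by have := (proj1 s_runs) j i (leq0n j) hji hik; lia.
Qed.

Lemma invR_second_run (i : 'I_n) : k <= i -> invR s i = 0.
Proof.
move=> hki; apply/eqP; rewrite cards_eq0; apply/eqP/setP => j; rewrite !inE.
apply/negbTE/negP => /andP[hij hsji].
by have := (proj2 s_runs) i j hki hij (ltn_ord j); lia.
Qed.

(* On each run |s i - i| is the number of inversions involving i. *)
Lemma Dstat_two_runs : Dstat s = 2 * Istat s.
Proof.
rewrite /Dstat (eq_bigr (fun i => invR s i + invL s i)); last first.
  move=> i _; have := perm_invLR s i; case: (ltnP i k) => hik.
    by rewrite (invL_first_run hik); lia.
  by rewrite (invR_second_run hik); lia.
by rewrite big_split /= -Istat_sum_invR -Istat_sum_invL; lia.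
Qed.

End InversionsOfTwoRuns.

Section Descents.
Variables (n : nat) (s : 'S_n).

Lemma nondescent_lt (p q : 'I_n) : p \notin descents s -> (q : nat) = p.+1 -> s p < s q.
Proof.
move=> hp hq; rewrite ltn_neqAle; apply/andP; split.
  by apply/negP => /eqP/val_inj/perm_inj epq; move: hq; rewrite epq; lia.
rewrite leqNgt; apply/negP => hqp; move/negP: hp; apply; rewrite inE.
by apply/existsP; exists q; rewrite hqp andbT; apply/eqP.
Qed.

Lemma increasing_on_nondescents a b :
  (forall p : 'I_n, a <= p -> p.+1 < b -> p \notin descents s) -> increasing_on s a b.
Proof.
move=> hd i j hai hij hjb.
suff: forall t (k : 'I_n), (k : nat) = i + t.+1 -> k < b -> s i < s k.
  by move=> gap; apply: (gap (j - i).-1) => //; lia.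
elim=> [|t IH] k hk hkb.
  by apply: nondescent_lt; [apply: hd; lia | lia].
have lt_n : i + t.+1 < n by have := ltn_ord k; lia.
apply: (ltn_trans (IH (Ordinal lt_n) erefl _)); first by rewrite /=; lia.
by apply: nondescent_lt; [apply: hd; rewrite /=; lia | rewrite /=; lia].
Qed.

Lemma two_runs_descent (d : nat) :
  (forall p : 'I_n, p \in descents s -> (p : nat) = d) -> two_runs s d.+1.
Proof.
by move=> hd; split; apply: increasing_on_nondescents => p hp1 hp2; apply/negP => /hd; lia.
Qed.

Lemma descents_eq0_perm1 : descents s = set0 -> s = 1%g.
Proof.
move=> no_desc; apply: (@increasing_tail_uniq _ _ _ 0) => // [|i j _ hij _].
  by apply: increasing_on_nondescents => p _ _; rewrite no_desc inE.
by rewrite !perm1.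
Qed.

End Descents.

(** * Fixed points and cycles *)

Section FixedPointsAndOrbits.
Variables (T : finType) (s : {perm T}).

Lemma porbit_fixed x : s x = x -> porbit s x = [set x].
Proof.
move=> sx; apply/setP => y; rewrite inE; apply/idP/eqP => [/porbitP [i ->]|->].
  by elim: i => [|i IH]; rewrite ?expg0 ?perm1 // expgSr permM IH sx.
exact: porbit_id.
Qed.

Lemma fixed_porbits : set1 @: [set x | s x == x] \subset porbits s.
Proof.
apply/subsetP => X /imsetP [x]; rewrite inE => /eqP sx ->.
by rewrite -porbit_fixed // imset_f.
Qed.

Lemma card_fixed_le_porbits : #|[set x | s x == x]| <= #|porbits s|.
Proof. by rewrite -(card_imset _ set1_inj) subset_leq_card // fixed_porbits. Qed.

Lemma card_fixed_lt_porbits u : s u != u -> #|[set x | s x == x]| < #|porbits s|.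
Proof.
move=> su; have new_orbit : porbit s u \notin set1 @: [set x | s x == x].
  apply/imsetP => [[x _ ex]].
  have := porbit_id s u; have := mem_porbit s 1 u.
  rewrite ex expg1 !inE => /eqP sux /eqP ux.
  by rewrite sux -ux eqxx in su.
have := cardsU1 (porbit s u) (set1 @: [set x | s x == x]).
rewrite new_orbit (card_imset _ set1_inj) add1n => <-.
by rewrite subset_leq_card // subUset sub1set imset_f ?fixed_porbits.
Qed.

Lemma card_porbits_le_fixed u : (forall x, s x != x -> porbit s x = porbit s u) ->
  #|porbits s| <= #|[set x | s x == x]|.+1.
Proof.
move=> one_cycle.
have sub : porbits s \subset porbit s u |: (set1 @: [set x | s x == x]).
  apply/subsetP => X /imsetP [x _ ->]; rewrite in_setU1.
  case: (eqVneq (s x) x) => sx; last by rewrite one_cycle // eqxx.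
  by rewrite porbit_fixed // imset_f ?orbT // inE sx.
apply: leq_trans (subset_leq_card sub) _.
by rewrite cardsU1 (card_imset _ set1_inj) -add1n leq_add2r leq_b1.
Qed.

Lemma card_porbits_le : #|porbits s| <= #|T|.
Proof. exact: leq_imset_card. Qed.

End FixedPointsAndOrbits.

Lemma Tstat_lt_card_moved n (s : 'S_n) : s != 1%g -> Tstat s < #|[set i | s i != i]|.
Proof.
move=> s_ne1.
have [u su] : exists u, s u != u.
  apply/existsP; apply: contraR s_ne1 => /existsPn fixes.
  by apply/eqP/permP => i; rewrite perm1; apply/eqP/negbNE.
have := card_fixed_lt_porbits su; have := card_porbits_le s.
have := cardsC [set x | s x == x]; rewrite card_ord.
have -> : ~: [set x | s x == x] = [set x | s x != x] by apply/setP => i; rewrite !inE.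
rewrite /Tstat /cyc; lia.
Qed.

(** * The shallow Grassmannian cycles *)

(* For x < y < z: the cycle x -> x+1 -> ... -> y-1 -> z-1 -> z-2 -> ... -> y -> x,
   i.e. the word 0 .. x-1, x+1 .. y-1, z-1, x, y .. z-2, z .. n-1. *)
Definition gcycle x y z i :=
  if i < x then i else if i.+1 < y then i.+1 else if i.+1 == y then z.-1
  else if i == y then x else if i < z then i.-1 else i.

Definition gcycle_inv x y z v :=
  if v < x then v else if v == x then y else if v < y then v.-1
  else if v < z.-1 then v.+1 else if v == z.-1 then y.-1 else v.

Definition gcycle_param n x y z := [&& x < y, y < z & z <= n].

Ltac case_ifs := repeat (case: ifP => /=; let H := fresh "H" in move=> H;
   try (move/negbT: H => H)).

Lemma gcycleK x y z : x < y -> y < z -> cancel (gcycle x y z) (gcycle_inv x y z).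
Proof. move=> hxy hyz i; rewrite /gcycle; case_ifs; rewrite /gcycle_inv; case_ifs; lia. Qed.

Lemma gcycle_lt n x y z i : gcycle_param n x y z -> i < n -> gcycle x y z i < n.
Proof. move=> /and3P[hxy hyz hzn]; rewrite /gcycle; case_ifs; lia. Qed.

(* Outside the parameter range the permutation is the identity (a junk value). *)
Definition gcycle_ord n x y z (i : 'I_n) : 'I_n :=
  if gcycle_param n x y z =P true is ReflectT p then Ordinal (gcycle_lt p (ltn_ord i))
  else i.

Lemma gcycle_ord_inj n x y z : injective (@gcycle_ord n x y z).
Proof.
rewrite /gcycle_ord; case: eqP => [p|_] i j // /(congr1 val) /=.
move: (p) => /and3P[hxy hyz _] /(congr1 (gcycle_inv x y z)).
by rewrite !gcycleK // => /val_inj.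
Qed.

Definition gcycle_perm n x y z : 'S_n := perm (@gcycle_ord_inj n x y z).

Section GcyclePerm.
Variables n x y z : nat.
Hypotheses (hxy : x < y) (hyz : y < z) (hzn : z <= n).
Let s := gcycle_perm n x y z.

Lemma gcycle_permE (i : 'I_n) : (s i : nat) = gcycle x y z i.
Proof.
rewrite /s /gcycle_perm permE /gcycle_ord; case: eqP => // hp.
by rewrite /gcycle_param hxy hyz hzn in hp.
Qed.

Lemma descents_gcycle_perm (p : 'I_n) : p \in descents s -> (p : nat) = y.-1.
Proof.
rewrite inE => /existsP [q /andP [/eqP hq]]; rewrite !gcycle_permE hq.
rewrite /gcycle; case_ifs; lia.
Qed.

Lemma two_runs_gcycle_perm : two_runs s y.
Proof. by have := two_runs_descent descents_gcycle_perm; rewrite prednK //; lia. Qed.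

Lemma grassmannian_gcycle_perm : grassmannian s.
Proof.
have hy : y.-1 < n by lia.
rewrite /grassmannian -(cards1 (Ordinal hy)) subset_leq_card //.
by apply/subsetP => p /descents_gcycle_perm hp; rewrite inE; apply/eqP/val_inj.
Qed.

Lemma gcycle_perm_fixed (i : 'I_n) : (s i == i) = ~~ (x <= i < z).
Proof.
rewrite -(inj_eq val_inj) /= gcycle_permE /gcycle.
by case_ifs; apply/idP/idP => h; first [by move/eqP: h; lia | by apply/eqP; lia].
Qed.

Lemma porbit_gcycle_perm (u : 'I_n) : (u : nat) = x ->
  forall j : 'I_n, s j != j -> porbit s j = porbit s u.
Proof.
move=> hu.
have step (a b : 'I_n) : gcycle x y z a = b -> porbit s a = porbit s b.
  move=> hab; have sab : s a = b by apply: val_inj; rewrite /= gcycle_permE.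
  by rewrite -sab -(porbit_perm s 1 a) expg1.
have up t (w : 'I_n) : (w : nat) = x + t -> x + t < y -> porbit s w = porbit s u.
  elim: t w => [|t IH] w hw hlt.
    by congr porbit; apply: val_inj; rewrite /= hw hu addn0.
  have lt_n : x + t < n by lia.
  rewrite -(step (Ordinal lt_n) w); last by rewrite /= hw /gcycle; case_ifs; lia.
  by apply: IH => /=; lia.
have down t (w : 'I_n) : (w : nat) = y + t -> y + t < z -> porbit s w = porbit s u.
  elim: t w => [|t IH] w hw hlt.
    by rewrite (step w u) // hw hu /gcycle; case_ifs; lia.
  have lt_n : y + t < n by lia.
  rewrite (step w (Ordinal lt_n)); last by rewrite /= hw /gcycle; case_ifs; lia.
  by apply: IH => /=; lia.
move=> j; rewrite gcycle_perm_fixed negbK => /andP [hxj hjz].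
by case: (ltnP j y) => hjy; [apply: (up (j - x)) | apply: (down (j - y))]; lia.
Qed.

Lemma cyc_gcycle_perm : cyc s = n - (z - x) + 1.
Proof.
have hx : x < n by lia.
have x_moved : s (Ordinal hx) != Ordinal hx.
  by rewrite gcycle_perm_fixed negbK /= leqnn (ltn_trans hxy hyz).
have cardF : #|[set i | s i == i]| = n - (z - x).
  have := cardsC [set i | s i == i]; rewrite card_ord.
  have -> : ~: [set i | s i == i] = [set i : 'I_n | x <= i < z].
    by apply/setP => i; rewrite !inE gcycle_perm_fixed negbK.
  rewrite card_ord_interval; lia.
have := card_fixed_lt_porbits x_moved.
have := card_porbits_le_fixed (porbit_gcycle_perm (u := Ordinal hx) erefl).
by rewrite /cyc cardF addn1 => le_cyc lt_cyc; apply/eqP; rewrite eqn_leq le_cyc lt_cyc.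
Qed.

Lemma Dstat_gcycle_perm : Dstat s = 2 * (z - x - 1).
Proof.
rewrite /Dstat; under eq_bigr do rewrite gcycle_permE.
rewrite -(big_mkord xpredT (fun i => maxn (gcycle x y z i) i - minn (gcycle x y z i) i)).
rewrite (eq_big_nat _ _ (F2 := fun i =>
   (if x <= i < y.-1 then 1 else 0) + (if y.-1 <= i < y then z - y else 0) +
   (if y <= i < y.+1 then y - x else 0) + (if y.+1 <= i < z then 1 else 0))); last first.
  by move=> i _; rewrite /gcycle; case_ifs; lia.
rewrite !big_split /= !sum_nat_interval_const ?subSnn; try lia.
by rewrite (_ : y - y.-1 = 1); lia.
Qed.

Lemma Istat_gcycle_perm : Istat s = z - x - 1.
Proof. by have := Dstat_two_runs two_runs_gcycle_perm; rewrite Dstat_gcycle_perm; lia. Qed.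

Lemma shallow_gcycle_perm : shallow s.
Proof.
by rewrite /shallow /Tstat Istat_gcycle_perm Dstat_gcycle_perm cyc_gcycle_perm; apply/eqP; lia.
Qed.

Lemma gcycle_perm_neq1 : s != 1%g.
Proof.
have hx : x < n by lia.
by apply/eqP => s1; have := gcycle_perm_fixed (Ordinal hx); rewrite s1 perm1 eqxx /=; lia.
Qed.

End GcyclePerm.

Lemma gcycle_perm_inj n x y z x' y' z' :
  x < y -> y < z -> z <= n -> x' < y' -> y' < z' -> z' <= n ->
  gcycle_perm n x y z = gcycle_perm n x' y' z' -> [/\ x = x', y = y' & z = z'].
Proof.
move=> h1 h2 h3 h1' h2' h3' e.
have same i : i < n -> gcycle x y z i = gcycle x' y' z' i.
  move=> hi; have := congr1 (fun s : 'S_n => (s (Ordinal hi) : nat)) e.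
  by rewrite /= !gcycle_permE.
have ex : x = x'.
  by case: (ltngtP x x') => // hx; [have := same x | have := same x'];
     move: hx h1 h2 h3 h1' h2' h3'; clear; rewrite /gcycle; case_ifs; lia.
have ez : z = z'.
  by case: (ltngtP z z') => // hz; [have := same z'.-1 | have := same z.-1];
     move: hz h1 h2 h3 h1' h2' h3'; clear; rewrite /gcycle; case_ifs; lia.
subst x' z'; split => //.
by case: (ltngtP y y') => // hy; [have := same y | have := same y'];
   move: hy h1 h2 h3 h1' h2' h3'; clear; rewrite /gcycle; case_ifs; lia.
Qed.

(** * Characterization and count *)

Section OneDescent.
Variables (n : nat) (s : 'S_n) (d : 'I_n).
Hypotheses (d_descent : d \in descents s) (s_runs : two_runs s d.+1).

Lemma first_run_invR (i : 'I_n) : i <= d -> (s i : nat) = i + invR s i.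
Proof. by move=> hid; have := perm_invLR s i; rewrite (invL_first_run s_runs) ?ltnS //; lia. Qed.

Lemma second_run_invL (i : 'I_n) : d < i -> s i + invL s i = i.
Proof. by move=> hdi; have := perm_invLR s i; rewrite (invR_second_run s_runs) //; lia. Qed.

Lemma descent_lt_perm : d < s d.
Proof.
have : 0 < invR s d.
  move: d_descent; rewrite inE => /existsP [q /andP [/eqP hq sqd]].
  by rewrite card_gt0; apply/set0Pn; exists q; rewrite inE hq ltnSn sqd.
by rewrite first_run_invR //; lia.
Qed.

(* A point moved after the descent has an inversion with some i <= d, hence with d. *)
Lemma card_moved_le : #|[set i | s i != i]| <=
  #|[set i : 'I_n | (i < d) && (s i != i)]| + (invR s d).+1.
Proof.
rewrite -(cardsID [set i : 'I_n | i < d] [set i | s i != i]).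
have -> : [set i | s i != i] :&: [set i : 'I_n | i < d] =
          [set i : 'I_n | (i < d) && (s i != i)].
  by apply/setP => i; rewrite !inE andbC.
rewrite leq_add2l -add1n.
apply: leq_trans (_ : #|d |: [set j : 'I_n | (d < j) && (s j < s d)]| <= _); last first.
  by rewrite cardsU1 leq_add2r leq_b1.
apply: subset_leq_card; apply/subsetP => j; rewrite !inE => /andP [hjd hsj].
case: (eqVneq j d) => //= j_ne_d.
have d_lt_j : d < j by move: j_ne_d hjd; rewrite -(inj_eq val_inj) /=; lia.
have : 0 < invL s j.
  rewrite lt0n; apply/negP => /eqP invL0; move/negP: hsj; apply.
  by apply/eqP/val_inj; have := second_run_invL d_lt_j; rewrite invL0 addn0.
rewrite card_gt0 => /set0Pn [i]; rewrite inE d_lt_j => /andP [hij hsji] /=.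
case: (ltngtP d i) => [hdi | hid | /val_inj edi].
- by have := (proj2 s_runs) i j hdi hij (ltn_ord j); lia.
- by have := (proj1 s_runs) i d (leq0n i) hid (ltnSn d); lia.
- by rewrite edi.
Qed.

Lemma invR_first_run_le1 : Istat s < #|[set i | s i != i]| ->
  forall i : 'I_n, i < d -> invR s i <= 1.
Proof.
move=> few_inv.
have moved_le_invR (i : 'I_n) : i < d -> (s i != i : nat) <= invR s i.
  move=> hid; have := first_run_invR (ltnW hid).
  case: (eqVneq (s i) i) => [// | si_ne] /= si; rewrite lt0n.
  apply/negP => /eqP invR0; move: si_ne; rewrite -(inj_eq val_inj) /= si invR0 addn0.
  by rewrite eqxx.
have sum_le : \sum_(i < n | i < d) invR s i + invR s d <= Istat s.
  rewrite Istat_sum_invR [X in _ <= X](bigID (fun i : 'I_n => i < d)) /= leq_add2l.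
  by rewrite (bigD1 d) ?ltnn //= leq_addr.
have count_moved : #|[set i : 'I_n | (i < d) && (s i != i)]| =
                   \sum_(i < n | i < d) (s i != i : nat).
  by rewrite card_set_sum [RHS]big_mkcond /=; apply: eq_bigr => i _; case: (i < d).
have := card_moved_le; rewrite count_moved => moved_le.
move=> i0 hi0; rewrite leqNgt; apply/negP => invR_i0.
have : \sum_(i < n | i < d) (s i != i : nat) < \sum_(i < n | i < d) invR s i.
  rewrite (bigD1 i0) //= [X in _ < X](bigD1 i0) //= -addSn.
  apply: leq_add; first exact: leq_ltn_trans (leq_b1 _) invR_i0.
  by apply: leq_sum => i /andP [hid _]; apply: moved_le_invR.
by move: sum_le few_inv moved_le; lia.
Qed.

(* The first moved point x starts a run of shifts s i = i + 1 up to the descent. *)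
Lemma one_descent_gcycle : (forall i : 'I_n, i < d -> invR s i <= 1) ->
  exists2 x, x <= d & s = gcycle_perm n x d.+1 (s d).+1.
Proof.
move=> invR_le1.
have d_in : (d == d) || (s d != d) by rewrite eqxx.
case: (@arg_minnP _ d (fun i : 'I_n => (i == d) || (s i != i)) val d_in).
move=> x x_first x_min.
have x_le_d : x <= d := x_min d d_in.
have fixed_before (i : 'I_n) : i < x -> s i = i.
  move=> hix; apply/eqP; apply: contraTT hix => si_ne.
  by rewrite -leqNgt x_min // si_ne orbT.
have shift_after (i : 'I_n) : x <= i -> i < d -> (s i : nat) = i.+1.
  move=> hxi hid; have x_lt_d : x < d by lia.
  have sx : (s x : nat) = x.+1.
    move: x_first; rewrite -(inj_eq val_inj) /= ltn_eqF //= => sx_ne.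
    have := first_run_invR (ltnW x_lt_d); have := invR_le1 x x_lt_d.
    by move: sx_ne; rewrite -(inj_eq val_inj) /=; lia.
  have := increasing_on_gap (proj1 s_runs) (leq0n x) hxi (leqW hid).
  by have := first_run_invR (ltnW hid); have := invR_le1 i hid; lia.
have d_lt_sd := descent_lt_perm.
have hzn : (s d).+1 <= n := ltn_ord (s d).
exists x => //.
apply: (@increasing_tail_uniq _ _ _ d.+1) => [||i hid].
- exact: (proj2 s_runs).
- by apply: (proj2 (two_runs_gcycle_perm _ _ hzn)); lia.
have si : (s i : nat) = if i < x then (i : nat) else if i < d then i.+1 else s d.
  case: ifP => [/fixed_before -> // | /negbT]; rewrite -leqNgt => hxi.
  case: ifP => [hid' | /negbT]; first by rewrite shift_after.
  rewrite -leqNgt => hdi; congr (val (s _)); apply: val_inj.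
  by apply/eqP; rewrite eqn_leq hdi -ltnS hid.
apply: val_inj; rewrite /= si gcycle_permE //; try lia.
by move: x_le_d hid d_lt_sd; rewrite /gcycle; case_ifs; lia.
Qed.

End OneDescent.

Lemma shallow_grassmannian_gcycle n (s : 'S_n) :
  shallow s -> grassmannian s -> s != 1%g ->
  exists x y z, [/\ x < y, y < z, z <= n & s = gcycle_perm n x y z].
Proof.
move=> s_shallow s_grass s_ne1.
have [no_desc | [d d_descent]] := set_0Vmem (descents s).
  by rewrite (descents_eq0_perm1 no_desc) eqxx in s_ne1.
have desc_d : descents s = [set d].
  by apply/esym/eqP; rewrite eqEcard sub1set d_descent cards1; exact: s_grass.
have s_runs : two_runs s d.+1.
  by apply: two_runs_descent => p; rewrite desc_d inE => /eqP ->.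
have few_inv : Istat s < #|[set i | s i != i]|.
  have := Tstat_lt_card_moved s_ne1; have := Dstat_two_runs s_runs.
  by move: s_shallow; rewrite /shallow => /eqP; lia.
have [x x_le_d s_eq] :=
  one_descent_gcycle d_descent s_runs (invR_first_run_le1 d_descent s_runs few_inv).
exists x, d.+1, (s d).+1; split => //.
by rewrite ltnS (descent_lt_perm d_descent s_runs).
Qed.

Lemma shallow_grassmannian_perm1 n : shallow (1%g : 'S_n) && grassmannian (1%g : 'S_n).
Proof.
have no_desc : descents (1%g : 'S_n) = set0.
  apply/setP => i; rewrite !inE; apply/negbTE/existsP => -[j /andP [/eqP hj]].
  by rewrite !perm1 hj ltnNge leqnSn.
have D0 : Dstat (1%g : 'S_n) = 0.
  by rewrite /Dstat big1 // => i _; rewrite perm1 maxnn minnn subnn.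
have I0 : Istat (1%g : 'S_n) = 0.
  have runs1 : two_runs (1%g : 'S_n) 0.+1.
    by apply: two_runs_descent => p; rewrite no_desc inE.
  by have := Dstat_two_runs runs1; rewrite D0; lia.
have cyc1 : cyc (1%g : 'S_n) = n.
  have all_fixed : [set x | (1%g : 'S_n) x == x] = setT.
    by apply/setP => i; rewrite !inE perm1 eqxx.
  have := card_fixed_le_porbits (1%g : 'S_n); have := card_porbits_le (1%g : 'S_n).
  rewrite all_fixed cardsT card_ord /cyc => le_n ge_n.
  by apply/eqP; rewrite eqn_leq le_n ge_n.
by rewrite /grassmannian no_desc cards0 /shallow /Tstat I0 D0 cyc1 subnn.
Qed.

Definition ltn_3tuples n := [set t : 3.-tuple 'I_n.+1 | sorted ltn (map val t)].

Definition gcycle_of_tuple n (t : 3.-tuple 'I_n.+1) : 'S_n :=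
  let v := map val t in gcycle_perm n (nth 0 v 0) (nth 0 v 1) (nth 0 v 2).

Lemma ltn_3tuplesP n (t : 3.-tuple 'I_n.+1) : t \in ltn_3tuples n ->
  exists a b c : 'I_n.+1, [/\ t = [tuple a; b; c], a < b, b < c & c <= n].
Proof.
rewrite inE; case: t => [[|a [|b [|c [|? ?]]]] //= ht] /and3P [hab hbc _].
by exists a, b, c; split; [apply: val_inj | | | rewrite -ltnS].
Qed.

Lemma gcycle_of_tuple_inj n : {in ltn_3tuples n &, injective (@gcycle_of_tuple n)}.
Proof.
move=> t t' /ltn_3tuplesP [a [b [c [-> hab hbc hc]]]].
move=> /ltn_3tuplesP [a' [b' [c' [-> hab' hbc' hc']]]].
rewrite /gcycle_of_tuple /= => e.
by have [/val_inj -> /val_inj -> /val_inj ->] := gcycle_perm_inj hab hbc hc hab' hbc' hc' e.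
Qed.

Lemma shallow_grassmannian_set n :
  [set s : 'S_n | shallow s && grassmannian s] = 1%g |: (@gcycle_of_tuple n @: ltn_3tuples n).
Proof.
apply/setP => s; rewrite !inE; apply/idP/idP.
  move=> /andP [s_shallow s_grass]; case: (eqVneq s 1%g) => [-> // | s_ne1].
  have [x [y [z [hxy hyz hzn ->]]]] := shallow_grassmannian_gcycle s_shallow s_grass s_ne1.
  apply/orP; right; apply/imsetP; exists [tuple inord x; inord y; inord z].
    by rewrite inE /= !inordK //; lia.
  by rewrite /gcycle_of_tuple /= !inordK //; lia.
case/orP => [/eqP -> | /imsetP [t /ltn_3tuplesP [a [b [c [-> hab hbc hc]]]] ->]].
  exact: shallow_grassmannian_perm1.
rewrite /gcycle_of_tuple /=.
by rewrite shallow_gcycle_perm // grassmannian_gcycle_perm.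
Qed.

Lemma perm1_notin_gcycles n : (1%g : 'S_n) \notin @gcycle_of_tuple n @: ltn_3tuples n.
Proof.
apply/imsetP => -[t /ltn_3tuplesP [a [b [c [-> hab hbc hc]]]]].
rewrite /gcycle_of_tuple /= => /esym/eqP.
by rewrite (negbTE (gcycle_perm_neq1 hab hbc hc)).
Qed.

Theorem corollary6p4 (n : nat) : 2 <= n ->
  #|[set s : 'S_n | shallow s && grassmannian s]| = 'C(n.+1, 3) + 1.
Proof.
move=> _.
rewrite shallow_grassmannian_set cardsU1 perm1_notin_gcycles.
by rewrite (card_in_imset (@gcycle_of_tuple_inj n)) card_ltn_sorted_tuples addnC.
Qed.
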